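(* Let $f,g\in\mathbb{F}[Y,Z]$. If $g$ is a linear form, then $\mathrm{maxrank}(M_{fg})\le 2\cdot\mathrm{maxrank}(M_f)$.
   Context: $\mathbb{F}$ is a field, $Y=\{y_1,\dots,y_m\}$ and $Z=\{z_1,\dots,z_m\}$ are disjoint sets of variables. For $f\in\mathbb{F}[Y,Z]$, the polynomial coefficient matrix $M_f$ is the $2^m\times 2^m$ matrix with entries in $\mathbb{F}[Y,Z]$, rows indexed by monic multilinear monomials $p$ in $Y$ and columns by monic multilinear monomials $q$ in $Z$, where $M_f(p,q)=G$ if and only if $f$ can be uniquely written as $f=pq\,G+Q$ with $G$ containing no variable other than those present in $p$ and $q$, and $Q$ having no monomial which is divisible by $pq$ and contains only variables present in $p$ and $q$. For $S:Y\cup Z\to\mathbb{F}$, $M_f|_S$ is obtained by evaluating each entry at $S$, and $\mathrm{maxrank}(M_f)=\max_S\mathrm{rank}(M_f|_S)$. *)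

From mathcomp Require Import all_boot all_algebra.
From mathcomp Require Export mpoly.
From Stdlib Require Import ClassicalEpsilon.
Set Implicit Arguments. Unset Strict Implicit. Unset Printing Implicit Defensive.
Import GRing.Theory.
Local Open Scope ring_scope.

(* Variables: Y = {y_1..y_m} are the variables 'X_(lshift m i), i : 'I_m;
   Z = {z_1..z_m} are the variables 'X_(rshift m j), j : 'I_m.
   So F[Y,Z] = {mpoly F[m + m]}. *)

(* A monic multilinear monomial in Y (resp. Z) is identified with its set of
   variables A : {set 'I_m}. *)

Definition pqvars (m : nat) (A B : {set 'I_m}) : {set 'I_(m + m)} :=
  (@lshift m m @: A) :|: (@rshift m m @: B).

Definition pqmnm (m : nat) (A B : {set 'I_m}) : 'X_{1..(m + m)} :=
  [multinom (i \in pqvars A B : nat) | i < m + m].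

Definition mnmvars (n : nat) (mu : 'X_{1..n}) : {set 'I_n} :=
  [set i | mu i != 0%N].

(* Entry M_f(p,q) = G, where f = p q G + Q uniquely with G only in the variables
   of p q and Q having no monomial divisible by p q using only variables of p q.
   Explicitly: the monomials of f that are divisible by pq and contain only the
   variables of pq are exactly those whose variable set equals vars(pq); G is
   the sum of these terms divided by pq. *)
Definition pcm_entry (F : fieldType) (m : nat) (f : {mpoly F[m + m]})
    (A B : {set 'I_m}) : {mpoly F[m + m]} :=
  \sum_(mu <- msupp f | mnmvars mu == pqvars A B)
     f@_mu *: 'X_[(mu - pqmnm A B)%MM].

Definition nmon (m : nat) : nat := #|{: {set 'I_m}}|.

(* The polynomial coefficient matrix M_f, rows/columns indexed by the
   enumeration of {set 'I_m} (monic multilinear monomials in Y resp. Z). *)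
Definition pcm (F : fieldType) (m : nat) (f : {mpoly F[m + m]})
    : 'M[{mpoly F[m + m]}]_(nmon m) :=
  \matrix_(i < nmon m, j < nmon m)
     pcm_entry f (enum_val (i : 'I_#|{: {set 'I_m}}|))
                 (enum_val (j : 'I_#|{: {set 'I_m}}|)).

Definition pcm_eval (F : fieldType) (m : nat) (f : {mpoly F[m + m]})
    (S : 'I_(m + m) -> F) : 'M[F]_(nmon m) :=
  map_mx (meval S) (pcm f).

(* maxrank(M_f) = max_S rank(M_f|_S); ranks are bounded by nmon m, so this
   max over the (classically decided) set of attained ranks is well defined. *)
Definition attained (F : fieldType) (m : nat) (f : {mpoly F[m + m]}) (r : nat)
    : bool :=
  if excluded_middle_informative
       (exists S : 'I_(m + m) -> F, \rank (pcm_eval f S) = r)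
  then true else false.

Definition maxrank (F : fieldType) (m : nat) (f : {mpoly F[m + m]}) : nat :=
  (\max_(r < (nmon m).+1 | attained f r) r)%N.

(* Write g = sum_k c_k x_k.  The entry M_f(p, q) only sees the monomials of f
   whose variable set is exactly vars(pq), and multiplying a monomial by x_k
   keeps its variable set if x_k occurs in it and adds x_k otherwise.  Hence
     M_(fg)(p, q) = g_(pq) M_f(p, q) + sum_(y_i | p) c_i M_f(p / y_i, q)
                                     + sum_(z_j | q) c_j M_f(p, q / z_j),
   where g_(pq) = sum of the c_k x_k over the variables x_k of pq.  Evaluated
   at S, M_(fg)|_S is the sum of a matrix whose rows are combinations of rows
   of M_f|_S and a matrix whose columns are combinations of columns of M_f|_S,
   each of rank at most rank(M_f|_S). *)
From HB Require Import structures.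
From mathcomp Require Import all_boot all_algebra.
From mathcomp Require Import mpoly.
From Stdlib Require Import ClassicalEpsilon.
Set Implicit Arguments. Unset Strict Implicit. Unset Printing Implicit Defensive.
Import GRing.Theory.
Local Open Scope ring_scope.

Section MonomialExtraction.
Variables (R : comNzRingType) (n : nat).
Implicit Types (T A : {set 'I_n}) (mu : 'X_{1..n}) (p g : {mpoly R[n]}).

Definition mnm_of_set T : 'X_{1..n} := [multinom (i \in T : nat) | i < n].

(* [mextract T p] is the G of the decomposition p = x^T G + Q of the paper,
   where x^T is the product of the variables in T. *)
Definition mextract_mono T mu : {mpoly R[n]} :=
  if mnmvars mu == T then 'X_[mu - mnm_of_set T] else 0.

Definition mextract T p : {mpoly R[n]} :=
  \sum_(mu <- msupp p) p@_mu *: mextract_mono T mu.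

Lemma mextract_big T p (s : seq 'X_{1..n}) : uniq s -> {subset msupp p <= s} ->
  mextract T p = \sum_(mu <- s) p@_mu *: mextract_mono T mu.
Proof.
move=> uniq_s supp_s; rewrite (bigID (mem (msupp p))) /=.
rewrite [X in _ + X]big1 ?addr0; last first.
  by move=> mu; rewrite -mcoeff_eq0 => /eqP ->; rewrite scale0r.
rewrite -big_filter; apply: perm_big; apply: uniq_perm.
- exact: msupp_uniq.
- exact: filter_uniq.
by move=> mu; rewrite mem_filter andb_idr // => /supp_s.
Qed.

Fact mextract_is_linear T : linear (mextract T).
Proof.
move=> c p q; set s := undup (msupp p ++ msupp q ++ msupp (c *: p + q)).
have uniq_s : uniq s by rewrite undup_uniq.
have in_s r : {subset msupp r <= msupp p ++ msupp q ++ msupp (c *: p + q)} ->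
    mextract T r = \sum_(mu <- s) r@_mu *: mextract_mono T mu.
  by move=> sub; apply: mextract_big => // mu /sub; rewrite mem_undup.
rewrite !in_s; try by move=> mu mu_r; rewrite !mem_cat mu_r ?orbT.
rewrite scaler_sumr -big_split; apply: eq_bigr => mu _ /=.
by rewrite mcoeffD mcoeffZ scalerDl scalerA.
Qed.

HB.instance Definition _ T :=
  GRing.isLinear.Build R {mpoly R[n]} {mpoly R[n]} _ (mextract T)
    (mextract_is_linear T).

Lemma mextractZ T c p : mextract T (c *: p) = c *: mextract T p.
Proof. exact: linearZZ. Qed.

Lemma mextractX T mu : mextract T 'X_[mu] = mextract_mono T mu.
Proof. by rewrite /mextract msuppX big_seq1 mcoeffX eqxx scale1r. Qed.

Lemma mnmvarsDU mu (k : 'I_n) : mnmvars (mu + U_(k))%MM = k |: mnmvars mu.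
Proof.
apply/setP => i; rewrite !inE mnmDE mnm1E addn_eq0 negb_and orbC.
by case: (eqVneq i k) => [->|/negbTE]; rewrite ?eqxx // eq_sym => ->.
Qed.

Lemma mnm_of_set_le mu : (mnm_of_set (mnmvars mu) <= mu)%MM.
Proof. by apply/mnm_lepP => i; rewrite mnmE inE; case: (mu i). Qed.

Lemma mnm_of_setD1 T k : k \in T -> mnm_of_set T = (mnm_of_set (T :\ k) + U_(k))%MM.
Proof.
move=> kT; apply/mnmP => i; rewrite mnmDE !mnmE !inE.
by case: (eqVneq i k) => [->|]; rewrite ?kT ?eqxx ?addn0.
Qed.

Lemma setU1_eq T A k : k \in T ->
  (k |: A == T) = (A == T) || (A == T :\ k).
Proof.
move=> kT; have [kA|kNA] := boolP (k \in A).
  rewrite (setUidPr _) ?sub1set //; case: (eqVneq A T) => //= _.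
  by apply/esym/negbTE; apply: contraTneq kA => ->; rewrite !inE eqxx.
have -> : (A == T) = false by apply: contraNF kNA => /eqP ->.
apply/eqP/eqP => [<-|->]; first by rewrite setU1K.
by rewrite setD1K.
Qed.

Lemma mextract_monoDU T mu k : mextract_mono T (mu + U_(k))%MM =
  if k \in T then 'X_k * mextract_mono T mu + mextract_mono (T :\ k) mu else 0.
Proof.
rewrite /mextract_mono mnmvarsDU.
have [kT|kNT] := boolP (k \in T); last first.
  by case: eqP => // vars_T; rewrite -vars_T setU11 in kNT.
rewrite setU1_eq //; have [vars_T|_] := eqVneq (mnmvars mu) T.
  have -> : (mnmvars mu == T :\ k) = false.
    by apply: contraTF kT => /eqP vars_Tk; rewrite -vars_T vars_Tk setD11.
  rewrite addr0 -mpolyXD addmC addmBA // -vars_T; exact: mnm_of_set_le.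
case: eqP => [_|_]; last by rewrite mulr0 add0r.
rewrite /= mulr0 add0r (mnm_of_setD1 kT) [(mnm_of_set _ + _)%MM]addmC -submDA.
by rewrite addmK.
Qed.

Lemma mextract_mulX T p k : mextract T (p * 'X_k) =
  if k \in T then 'X_k * mextract T p + mextract (T :\ k) p else 0.
Proof.
rewrite {1}(mpolyE p) mulr_suml linear_sum /=.
under eq_bigr => mu _ do
  rewrite -scalerAl -[X in _ * X]/('X_[U_(k)]) -mpolyXD mextractZ mextractX
          mextract_monoDU.
case: (k \in T); last by rewrite big1 // => mu _; rewrite scaler0.
rewrite /mextract mulr_sumr -big_split; apply: eq_bigr => mu _ /=.
by rewrite scalerDr scalerAr.
Qed.

Lemma mpoly_homog1E g : g \is 1.-homog for mdeg -> g = \sum_(k < n) g@_U_(k) *: 'X_k.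
Proof.
move=> g_lin; apply/mpolyP => mu; rewrite linear_sum /=.
under eq_bigr => k _ do rewrite mcoeffZ mcoeffX.
have [/eqP/mdeg1P[i /eqP ->]|deg_mu] := eqVneq (mdeg mu) 1%N.
  rewrite (bigD1 i) //= eqxx mulr1 big1 ?addr0 // => j ji.
  by rewrite eq_mnm1 (negbTE ji) mulr0.
rewrite (dhomog_nemf_coeff g_lin deg_mu) big1 // => k _.
case: eqP => [mu_k|_]; last by rewrite mulr0.
by rewrite -mu_k mdeg1 in deg_mu.
Qed.

Lemma mextract_mul_homog1 T p g : g \is 1.-homog for mdeg ->
  mextract T (p * g) = (\sum_(k in T) g@_U_(k) *: 'X_k) * mextract T p
                       + \sum_(k in T) g@_U_(k) *: mextract (T :\ k) p.
Proof.
move=> g_lin; rewrite {1}(mpoly_homog1E g_lin) mulr_sumr linear_sum /=.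
under eq_bigr => k _ do rewrite -scalerAr mextractZ mextract_mulX.
rewrite mulr_suml -big_split (bigID (mem T)) /=.
rewrite [X in _ + X]big1 ?addr0; last by move=> k /negbTE ->; rewrite scaler0.
by apply: eq_bigr => k ->; rewrite scalerDr scalerAl.
Qed.

Lemma meval_mextract_mul_homog1 (v : 'I_n -> R) T p g :
  g \is 1.-homog for mdeg ->
  (mextract T (p * g)).@[v] = (\sum_(k in T) g@_U_(k) * v k) * (mextract T p).@[v]
                               + \sum_(k in T) g@_U_(k) * (mextract (T :\ k) p).@[v].
Proof.
move=> g_lin; rewrite mextract_mul_homog1 // mevalD mevalM.
congr (_ * _ + _); rewrite raddf_sum /=; apply: eq_bigr => k _.
  by rewrite mevalZ mevalXU.
exact: mevalZ.
Qed.

End MonomialExtraction.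

Section PQVars.
Variable m : nat.
Implicit Types A B : {set 'I_m}.

Lemma mem_pqvars_l A B x : (lshift m x \in pqvars A B) = (x \in A).
Proof.
rewrite !inE mem_imset; last exact: lshift_inj.
by apply/orb_idr => /imsetP[y _ /eqP]; rewrite eq_lrshift.
Qed.

Lemma mem_pqvars_r A B y : (rshift m y \in pqvars A B) = (y \in B).
Proof.
rewrite !inE (mem_imset _ _ (@rshift_inj m m)); apply/orb_idl.
by case/imsetP=> x _ /eqP; rewrite eq_rlshift.
Qed.

Lemma pqvars_setD1l A B x : pqvars (A :\ x) B = pqvars A B :\ lshift m x.
Proof.
apply/setP => k; rewrite -(splitK k); case: split => j /=;
  by rewrite in_setD1 ?mem_pqvars_l ?mem_pqvars_r ?in_setD1 ?eq_lshift ?eq_rlshift.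
Qed.

Lemma pqvars_setD1r A B y : pqvars A (B :\ y) = pqvars A B :\ rshift m y.
Proof.
apply/setP => k; rewrite -(splitK k); case: split => j /=;
  by rewrite in_setD1 ?mem_pqvars_l ?mem_pqvars_r ?in_setD1 ?eq_rshift ?eq_lrshift.
Qed.

Lemma sum_pqvars (V : nmodType) A B (h : 'I_(m + m) -> V) :
  \sum_(k in pqvars A B) h k =
    \sum_(x in A) h (lshift m x) + \sum_(y in B) h (rshift m y).
Proof.
rewrite big_split_ord; congr (_ + _); apply: eq_bigl => z.
  exact: mem_pqvars_l.
exact: mem_pqvars_r.
Qed.

End PQVars.

Lemma submx_row_combination (K : fieldType) (r p : nat) (X : finType)
    (M : 'M[K]_(r, p)) (a : 'I_r -> K) (P : 'I_r -> pred X) (c : X -> K)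
    (h : X -> 'I_r -> 'I_r) :
  (\matrix_(i, j) (a i * M i j + \sum_(x | P i x) c x * M (h x i) j)%R <= M)%MS.
Proof.
apply/row_subP => i; set N := \matrix_(_, _) _.
have -> : row i N = a i *: row i M + \sum_(x | P i x) c x *: row (h x i) M.
  apply/rowP => j; rewrite !mxE summxE; congr (_ + _).
  by apply: eq_bigr => x _; rewrite !mxE.
rewrite addmx_sub ?scalemx_sub ?row_sub //.
by apply: summx_sub => x _; rewrite scalemx_sub ?row_sub.
Qed.

Section ProductWithLinearForm.
Variables (F : fieldType) (m : nat) (f g : {mpoly F[m + m]}) (S : 'I_(m + m) -> F).
Hypothesis g_lin : g \is 1.-homog for mdeg.

Definition monset (i : 'I_(nmon m)) : {set 'I_m} :=
  enum_val (i : 'I_#|{: {set 'I_m}}|).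
Definition monidx (A : {set 'I_m}) : 'I_(nmon m) := enum_rank A.

Let M := pcm_eval f S.
Let gY (A : {set 'I_m}) : F := \sum_(x in A) g@_U_(lshift m x) * S (lshift m x).
Let gZ (B : {set 'I_m}) : F := \sum_(y in B) g@_U_(rshift m y) * S (rshift m y).

Lemma pcm_entryE (h : {mpoly F[m + m]}) A B :
  pcm_entry h A B = mextract (pqvars A B) h.
Proof.
rewrite /pcm_entry /mextract big_mkcond; apply: eq_bigr => mu _.
by rewrite /mextract_mono; case: ifP; rewrite ?scaler0.
Qed.

Lemma pcm_evalE (h : {mpoly F[m + m]}) i j :
  pcm_eval h S i j = meval S (mextract (pqvars (monset i) (monset j)) h).
Proof. by rewrite !mxE pcm_entryE. Qed.

Lemma pcm_eval_mul_homog1E i j : pcm_eval (f * g) S i j =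
    gY (monset i) * M i j
    + \sum_(x in monset i) g@_U_(lshift m x) * M (monidx (monset i :\ x)) j
  + (gZ (monset j) * M i j
    + \sum_(y in monset j) g@_U_(rshift m y) * M i (monidx (monset j :\ y))).
Proof.
have pcm_eval_setD1l x : M (monidx (monset i :\ x)) j =
    (mextract (pqvars (monset i) (monset j) :\ lshift m x) f).@[S].
  by rewrite pcm_evalE /monset /monidx enum_rankK pqvars_setD1l.
have pcm_eval_setD1r y : M i (monidx (monset j :\ y)) =
    (mextract (pqvars (monset i) (monset j) :\ rshift m y) f).@[S].
  by rewrite pcm_evalE /monset /monidx enum_rankK pqvars_setD1r.
under [\sum_(x in monset i) _]eq_bigr do rewrite pcm_eval_setD1l.
under [\sum_(y in monset j) _]eq_bigr do rewrite pcm_eval_setD1r.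
rewrite /M !pcm_evalE meval_mextract_mul_homog1 // !sum_pqvars mulrDl -!addrA.
by congr (_ + _); apply: addrCA.
Qed.

Lemma mxrank_pcm_eval_mul_homog1 :
  (\rank (pcm_eval (f * g) S) <= 2 * \rank (pcm_eval f S))%N.
Proof.
pose Mrow := \matrix_(i, j) (gY (monset i) * M i j
  + \sum_(x in monset i) g@_U_(lshift m x) * M (monidx (monset i :\ x)) j).
pose Mcol := \matrix_(j, i) (gZ (monset j) * M^T j i
  + \sum_(y in monset j) g@_U_(rshift m y) * M^T (monidx (monset j :\ y)) i).
have -> : pcm_eval (f * g) S = Mrow + Mcol^T.
  apply/matrixP => i j; rewrite pcm_eval_mul_homog1E !mxE.
  by do 2 congr (_ + _); apply: eq_bigr => y _; rewrite [M^T _ _]mxE.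
rewrite mul2n -addnn; apply: leq_trans (mxrank_add _ _) (leq_add _ _).
  exact/mxrankS/submx_row_combination.
by rewrite mxrank_tr -(mxrank_tr M); apply/mxrankS/submx_row_combination.
Qed.

End ProductWithLinearForm.

Theorem corollary1 (F : fieldType) (m : nat) (f g : {mpoly F[m + m]}) :
  g \is @ishomog1 (m + m) F 1 mdeg ->
  (maxrank (f * g) <= 2 * maxrank f)%N.
Proof.
move=> g_lin; apply/bigmax_leqP => r; rewrite /attained.
case: excluded_middle_informative => // -[S rank_S] _; rewrite -rank_S.
apply: leq_trans (mxrank_pcm_eval_mul_homog1 f S g_lin) _; rewrite leq_mul2l /=.
have rank_lt : (\rank (pcm_eval f S) < (nmon m).+1)%N by rewrite ltnS rank_leq_row.
apply: (leq_bigmax_cond (Ordinal rank_lt)); rewrite /attained.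
by case: excluded_middle_informative => // -[]; exists S.
Qed.
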